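(* Let $\mathcal{T}$ be a finite set and let $\mathbf{p}_0, \mathbf{p}_1, \mathbf{q}$ be probability measures on $\mathcal{T}$. For probability measures $\mathbf{r},\mathbf{s}$ on $\mathcal{T}$ write $\mathbf{h}_{\mathbf{r},\mathbf{s}}(x) = \mathbf{s}(x) - \mathbf{r}(x)$. Let $\sqsubset$ be a strict total order on $\mathcal{T}$ such that $\mathbf{h}_{\mathbf{p}_0,\mathbf{q}}(x) > \mathbf{h}_{\mathbf{p}_0,\mathbf{q}}(x')$ implies $x \sqsubset x'$, and $\mathbf{h}_{\mathbf{p}_0,\mathbf{q}}(x) < \mathbf{h}_{\mathbf{p}_0,\mathbf{q}}(x')$ implies $x' \sqsubset x$. Suppose further that whenever $\mathbf{h}_{\mathbf{p}_0,\mathbf{p}_1}(x) > 0$ and $\mathbf{h}_{\mathbf{p}_0,\mathbf{p}_1}(y) \le 0$, we have $x \sqsubset y$. For a probability measure $\mathbf{p}$ on $\mathcal{T}$, let $X_\mathbf{p} \sim \mathbf{p}$ and $Y_\mathbf{q} \sim \mathbf{q}$ be independent and define $R_{\mathbf{p},\mathbf{q}}$ to be $0$ if $Y_\mathbf{q} \sqsubset X_\mathbf{p}$, $1$ if $X_\mathbf{p} \sqsubset Y_\mathbf{q}$, and an independent $\mathrm{Bernoulli}(1/2)$ random variable if $X_\mathbf{p} = Y_\mathbf{q}$. Then $\Pr[R_{\mathbf{p}_0,\mathbf{q}} = 0] \ge \Pr[R_{\mathbf{p}_1,\mathbf{q}} = 0]$. *)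

From mathcomp Require Import all_boot all_order all_algebra.
Set Implicit Arguments. Unset Strict Implicit. Unset Printing Implicit Defensive.
Import Order.TTheory GRing.Theory Num.Theory.
Local Open Scope ring_scope.

Definition is_prob (R : realFieldType) (T : finType) (p : T -> R) : Prop :=
  (forall x, 0 <= p x) /\ \sum_(x : T) p x = 1.

Definition hdiff (R : realFieldType) (T : finType) (r s : T -> R) (x : T) : R :=
  s x - r x.

Definition strict_total_order (T : finType) (lt : rel T) : Prop :=
  [/\ (forall x, ~~ lt x x),
      (forall x y z, lt x y -> lt y z -> lt x z) &
      (forall x y, x != y -> lt x y || lt y x)].

(* Pr[R_{p,q} = 0], where X ~ p, Y ~ q independent, R = 0 if Y ⊏ X,
   R = 1 if X ⊏ Y, and R ~ Bernoulli(1/2) independent if X = Y.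
   By independence this probability is
   sum_{x,y} p(x) q(y) ( [y ⊏ x] + 1/2 [x = y] ). *)
Definition prob_R0 (R : realFieldType) (T : finType) (lt : rel T)
    (p q : T -> R) : R :=
  \sum_(x : T) \sum_(y : T)
     p x * q y * ((if lt y x then 1 else 0) + (if x == y then 2^-1 else 0)).

(** Conditionally on [X_p = x], the event [R_{p,q} = 0] has probability
    [F x = Pr[Y_q ⊏ x] + Pr[Y_q = x]/2], which is nondecreasing along [⊏];
    hence [Pr[R_{p,q} = 0] = Σ_x p(x) F(x)]. Going from [p0] to [p1] moves mass
    from points [y] with [h_{p0,p1}(y) <= 0] to points [x] with
    [h_{p0,p1}(x) > 0], all of which precede every such [y]. Any threshold [c]
    between the values of [F] on the two groups gives
    [Σ_x h_{p0,p1}(x) F(x) = Σ_x h_{p0,p1}(x) (F(x) - c) <= 0]. *)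
From mathcomp Require Import all_boot all_order all_algebra.
Set Implicit Arguments. Unset Strict Implicit. Unset Printing Implicit Defensive.
Import Order.TTheory GRing.Theory Num.Theory.
Local Open Scope ring_scope.

Section MassShift.
Variables (R : realFieldType) (T : finType).

Lemma ler_wsum_downshift (p0 p1 F : T -> R) :
  \sum_x p1 x = \sum_x p0 x ->
  (forall x y, 0 < p1 x - p0 x -> p1 y - p0 y <= 0 -> F x <= F y) ->
  \sum_x p1 x * F x <= \sum_x p0 x * F x.
Proof.
move=> eq_mass shiftF; rewrite -subr_le0 -sumrB.
pose d x := p1 x - p0 x.
rewrite (eq_bigr (fun x => d x * F x)) => [|x _]; last by rewrite mulrBl.
have d_sum0 : \sum_x d x = 0 by rewrite sumrB eq_mass subrr.
have threshold c : (forall x, 0 < d x -> F x <= c) ->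
    (forall y, d y <= 0 -> c <= F y) -> \sum_x d x * F x <= 0.
  move=> Fle Fge.
  have -> : \sum_x d x * F x = \sum_x d x * (F x - c).
    under [RHS]eq_bigr => x _ do rewrite mulrBr.
    by rewrite sumrB -mulr_suml d_sum0 mul0r subr0.
  apply: sumr_le0 => x _; have [dx_gt0|dx_le0] := ltP 0 (d x).
    by apply: mulr_ge0_le0; [exact: ltW | rewrite subr_le0 Fle].
  by apply: mulr_le0_ge0; rewrite // subr_ge0 Fge.
case: (pickP (fun x => 0 < d x)) => [x0 dx0_gt0|no_gain].
  apply: (threshold (\big[Num.max/F x0]_(x | 0 < d x) F x)).
    by move=> x dx_gt0; rewrite (bigD1 x) //= le_max lexx.
  move=> y dy_le0; apply: (big_ind (fun m => m <= F y)) => [||x dx_gt0].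
  - exact: shiftF.
  - by move=> a b; rewrite ge_max => -> ->.
  - exact: shiftF.
have d_le0 x : d x <= 0 by rewrite leNgt no_gain.
have d0 x : d x = 0.
  apply/eqP; rewrite -oppr_eq0; apply/eqP; move: x isT.
  apply: psumr_eq0P => [x _|]; first by rewrite oppr_ge0 d_le0.
  by rewrite sumrN d_sum0 oppr0.
by rewrite big1 // => x _; rewrite d0 mul0r.
Qed.

End MassShift.

Section RankingOutcome.
Variables (R : realFieldType) (T : finType) (lt : rel T).

Definition R0_weight (x y : T) : R :=
  (if lt y x then 1 else 0) + (if x == y then 2^-1 else 0).

Definition R0_score (q : T -> R) (x : T) : R := \sum_y q y * R0_weight x y.

Lemma prob_R0E (p q : T -> R) : prob_R0 lt p q = \sum_x p x * R0_score q x.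
Proof.
apply: eq_bigr => x _; rewrite mulr_sumr.
by apply: eq_bigr => y _; rewrite mulrA.
Qed.

Hypothesis lt_irr : irreflexive lt.
Hypothesis lt_trans : transitive lt.

Lemma R0_weight_mono (x x' y : T) :
  lt x x' -> R0_weight x y <= R0_weight x' y.
Proof.
move=> lt_xx'; have lt_x'x : lt x' x = false.
  by apply/negbTE/negP => /(lt_trans lt_xx'); rewrite lt_irr.
rewrite /R0_weight; have [<-|ne_xy] := eqVneq x y.
  have ne_x'x : (x' == x) = false.
    by apply/negbTE; apply: contraTneq lt_xx' => ->; rewrite lt_irr.
  by rewrite lt_irr lt_xx' ne_x'x add0r addr0 invf_le1 ?ler1n ?ltr0n.
have [<-|_] := eqVneq x' y.
  by rewrite lt_x'x lt_irr !add0r invr_ge0.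
rewrite !addr0; case: ifP => [lt_yx|_]; first by rewrite (lt_trans lt_yx lt_xx').
by case: ifP.
Qed.

Lemma R0_score_mono (q : T -> R) (x x' : T) :
  (forall y, 0 <= q y) -> lt x x' -> R0_score q x <= R0_score q x'.
Proof.
move=> q_ge0 lt_xx'; apply: ler_sum => y _.
by apply: ler_wpM2l => //; exact: R0_weight_mono.
Qed.

End RankingOutcome.

Theorem lemmaA17 (R : realFieldType) (T : finType) (p0 p1 q : T -> R)
    (lt : rel T) :
  is_prob p0 -> is_prob p1 -> is_prob q ->
  strict_total_order lt ->
  (forall x x', hdiff p0 q x > hdiff p0 q x' -> lt x x') ->
  (forall x x', hdiff p0 q x < hdiff p0 q x' -> lt x' x) ->
  (forall x y, hdiff p0 p1 x > 0 -> hdiff p0 p1 y <= 0 -> lt x y) ->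
  prob_R0 lt p0 q >= prob_R0 lt p1 q.
Proof.
move=> [_ p0_sum1] [_ p1_sum1] [q_ge0 _] [irr trans _] _ _ sep.
have lt_irr : irreflexive lt := fun x => negbTE (irr x).
have lt_trans : transitive lt := fun y x z => @trans x y z.
rewrite !prob_R0E; apply: ler_wsum_downshift => [|x y gain_x loss_y].
  by rewrite p0_sum1 p1_sum1.
exact: (R0_score_mono lt_irr lt_trans q_ge0 (sep x y gain_x loss_y)).
Qed.
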